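(* Let $Z_1,\dots,Z_d$ be nonzero complex numbers with $|Z_1|\le\cdots\le|Z_d|$, not all of the same modulus, let $R=\min\{|Z_{i+1}|/|Z_i| : |Z_{i+1}|>|Z_i|\}$ and $I=\{i: 1\le i\le d-1,\ |Z_i|<|Z_{i+1}|\}\cup\{0,d\}$. Let $i_1<i_2$ be successive elements of $I$ (i.e. both in $I$ and no element of $I$ lies strictly between them), and let $i_1<l<i_2$. Then \[ |\sigma_{d-l}(Z)|\le\left(\binom{i_2-i_1}{i_2-l}+c'\right)|Z_{i_2}|^{i_2-l}\,|Z_{i_2+1}|\cdots|Z_d|, \] where $c'=\left(\binom{d}{l}-\binom{i_2-i_1}{i_2-l}\right)R^{-1}<2^dR^{-1}$.
   Context: $\sigma_k(Z)=\sum_{j_1<\dots<j_k}Z_{j_1}\cdots Z_{j_k}$ denotes the $k$-th elementary symmetric function of $Z=(Z_1,\dots,Z_d)$; an empty product equals $1$. *)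

From HB Require Import structures.
From mathcomp Require Import all_boot all_order all_algebra.
Set Implicit Arguments. Unset Strict Implicit. Unset Printing Implicit Defensive.
Import Order.TTheory GRing.Theory Num.Theory.
Local Open Scope ring_scope.

(* Convention: Z : nat -> C, and only Z 1, ..., Z d are used (paper's 1-based
   indexing).  C is any numClosedFieldType (e.g. complex numbers). *)

Definition elem_sym (C : numClosedFieldType) (d : nat) (Z : nat -> C) (k : nat) : C :=
  \sum_(S : {set 'I_d} | #|S| == k) \prod_(j in S) Z j.+1.

Definition inI (C : numClosedFieldType) (d : nat) (Z : nat -> C) (i : nat) : bool :=
  [|| i == 0%N, i == d | [&& (1 <= i)%N, (i <= d.-1)%N & `|Z i| < `|Z i.+1|]].

Definition is_min_ratio (C : numClosedFieldType) (d : nat) (Z : nat -> C) (R : C) : Prop :=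
  (exists i, [/\ (1 <= i)%N, (i < d)%N, `|Z i| < `|Z i.+1| & R = `|Z i.+1| / `|Z i|])
  /\ (forall i, (1 <= i)%N -> (i < d)%N -> `|Z i| < `|Z i.+1| -> R <= `|Z i.+1| / `|Z i|).

From HB Require Import structures.
From mathcomp Require Import all_boot all_order all_algebra.
From mathcomp Require Import zify ring.
Set Implicit Arguments. Unset Strict Implicit. Unset Printing Implicit Defensive.
Import Order.TTheory GRing.Theory Num.Theory.
Local Open Scope ring_scope.

(* Write sigma_{d-l}(Z) as the sum, over the (d-l)-subsets S of {1..d}, of
   the products Z_S.  The moduli equal m = |Z_{i2}| on the block (i1, i2], are
   at most m/R below it and at least R m above it.  The largest possible
   modulus of a term is m^(i2-l) |Z_{i2+1} ... Z_d|, attained when S contains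
   every index above the block, hence i2 - l indices of the block; each index
   of S below the block, and each index above the block missing from S, costs
   a factor R against this bound.  So at most C(i2-i1, i2-l) terms reach the
   bound and the other C(d,l) - C(i2-i1, i2-l) terms stay below 1/R of it;
   finally C(d,l) < 2^d. *)

Lemma bin_lt_exp2 n k : (0 < n)%N -> ('C(n, k) < 2 ^ n)%N.
Proof.
move=> n_gt0; rewrite -[n in 'C(n, _)]card_ord -card_draws.
rewrite -[n in (_ < 2 ^ n)%N]card_ord -cardsT -card_powerset.
apply: proper_card; rewrite properE; apply/andP; split.
  by apply/subsetP => A _; rewrite powersetE subsetT.
apply/subsetPn; have [->|k_neq0] := eqVneq k 0%N.
  by exists [set: 'I_n]; rewrite ?powersetE ?inE ?cardsT ?card_ord -?lt0n.
by exists set0; rewrite ?powersetE ?sub0set ?inE ?cards0 // eq_sym.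
Qed.

Definition ord_range d a b : {set 'I_d} := [set j : 'I_d | (a <= j < b)%N].

Lemma card_ord_range d a b : (a <= b <= d)%N -> #|ord_range d a b| = (b - a)%N.
Proof.
move=> /andP[_ le_bd]; rewrite -sum1_card -[RHS]muln1 -sum_nat_const_nat.
rewrite big_geq_mkord /= (big_ord_widen_cond _ (fun j => a <= j)%N (fun _ => 1%N) le_bd).
by apply: eq_bigl => j; rewrite inE andbC.
Qed.

Lemma big_ord_range3 (T : Type) (idx : T) (op : Monoid.com_law idx) d a b
    (S : {set 'I_d}) (F : 'I_d -> T) : (a <= b)%N ->
  \big[op/idx]_(j in S) F j =
  op (op (\big[op/idx]_(j in S :&: ord_range d 0 a) F j)
         (\big[op/idx]_(j in S :&: ord_range d a b) F j))
     (\big[op/idx]_(j in S :&: ord_range d b d) F j).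
Proof.
move=> le_ab; rewrite (big_setID (ord_range d 0 a)).
rewrite [X in op _ X](big_setID (ord_range d a b)) Monoid.mulmA.
congr (op (op _ _) _); apply: eq_bigl => j; rewrite !inE; have := ltn_ord j;
  case: (j \in S); rewrite ?andbF ?andbT //=; lia.
Qed.

Lemma big_ord_range_succ (T : Type) (idx : T) (op : Monoid.law idx) d a
    (F : nat -> T) :
  \big[op/idx]_(j in ord_range d a d) F j.+1 = \big[op/idx]_(a.+1 <= j < d.+1) F j.
Proof.
rewrite big_add1 /= big_geq_mkord.
by apply: eq_bigl => j; rewrite inE ltn_ord andbT.
Qed.

(* Positions j : 'I_d stand for Z_{j+1}: [ord_range d 0 a], [ord_range d a b]
   and [ord_range d b d] are the indices below, in and above the block (a, b]. *)
Definition defect d a b (S : {set 'I_d}) : nat :=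
  #|S :&: ord_range d 0 a| + #|ord_range d b d :\: S|.

Lemma defect0_eq d a b (S : {set 'I_d}) : defect a b S = 0%N ->
  S = S :&: ord_range d a b :|: ord_range d b d.
Proof.
move=> /eqP; rewrite addn_eq0 !cards_eq0 setD_eq0 => /andP[/eqP S_low /subsetP S_high].
apply/setP => j; rewrite !inE; have := ltn_ord j.
case: (boolP (j \in S)) => [Sj|nSj] /=.
  have : j \notin S :&: ord_range d 0 a by rewrite S_low inE.
  by rewrite !inE Sj /=; lia.
move=> _; apply/esym/negbTE; apply: contra nSj => j_high.
by apply: S_high; rewrite inE.
Qed.

Lemma card_defect0_le d a b k : (a <= b <= d)%N ->
  (#|[set S : {set 'I_d} | #|S| == k & defect a b S == 0%N]|
     <= 'C(b - a, k - (d - b)))%N.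
Proof.
move=> /andP[le_ab le_bd].
rewrite -(@card_in_imset _ _ (fun S => S :&: ord_range d a b)); last first.
  move=> S1 S2; rewrite !inE => /andP[_ /eqP S1_top] /andP[_ /eqP S2_top] eq12.
  by rewrite (defect0_eq S1_top) (defect0_eq S2_top) eq12.
rewrite -(card_ord_range (d := d)) ?le_ab // -cards_draws.
apply/subset_leq_card/subsetP => _ /imsetP[S + ->]; rewrite !inE subsetIr /=.
move=> /andP[/eqP <- /eqP S_top].
rewrite {2}[S](defect0_eq S_top) cardsU.
have -> : S :&: ord_range d a b :&: ord_range d b d = set0.
  by apply/setP => j; rewrite !inE; case: (j \in S) => //=; lia.
by rewrite cards0 card_ord_range ?le_bd ?leqnn // subn0 addnK.
Qed.

Section BlockWeights.

Variables (F : numFieldType) (d a b : nat) (w : 'I_d -> F) (m r : F).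
Hypotheses (le_ab : (a <= b)%N) (le_bd : (b <= d)%N).
Hypotheses (w_ge0 : forall j, 0 <= w j) (m_gt0 : 0 < m) (r_ge1 : 1 <= r).
Hypothesis w_low : forall j : 'I_d, (j < a)%N -> w j * r <= m.
Hypothesis w_mid : forall j : 'I_d, (a <= j < b)%N -> w j = m.
Hypothesis w_high : forall j : 'I_d, (b <= j)%N -> r * m <= w j.

Lemma prod_mul_exp_defect_le (S : {set 'I_d}) :
  \prod_(j in S) w j * r ^+ defect a b S * m ^+ #|ord_range d b d|
    <= m ^+ #|S| * \prod_(j in ord_range d b d) w j.
Proof.
have r_ge0 : 0 <= r := le_trans ler01 r_ge1.
rewrite /defect.
set L := S :&: ord_range d 0 a; set B := S :&: ord_range d a b.
set H := S :&: ord_range d b d; set D := ord_range d b d :\: S.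
have cardS : #|S| = (#|L| + #|B| + #|H|)%N.
  by rewrite -!sum1_card (big_ord_range3 _ _ _ le_ab).
have cardH : #|ord_range d b d| = (#|H| + #|D|)%N by rewrite -(cardsID S) setIC.
have prodS : \prod_(j in S) w j = \prod_(j in L) w j * m ^+ #|B| * \prod_(j in H) w j.
  rewrite (big_ord_range3 _ _ _ le_ab) -/L -/B -/H -prodr_const.
  by congr (_ * _ * _); apply: eq_bigr => j; rewrite !inE => /andP[_ /w_mid].
have prodH : \prod_(j in ord_range d b d) w j = \prod_(j in H) w j * \prod_(j in D) w j.
  by rewrite (big_setID S) setIC.
have lowP : \prod_(j in L) w j * r ^+ #|L| <= m ^+ #|L|.
  rewrite -!prodr_const -big_split /=; apply: ler_prod => j.
  by rewrite !inE => /andP[_ /andP[_ /w_low ->]]; rewrite mulr_ge0 ?w_ge0.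
have highP : (r * m) ^+ #|D| <= \prod_(j in D) w j.
  rewrite -prodr_const; apply: ler_prod => j.
  by rewrite !inE => /and3P[_ le_bj _]; rewrite w_high // andbT mulr_ge0 // ltW.
rewrite cardS cardH prodS prodH !exprD.
set PL := \prod_(j in L) w j; set PH := \prod_(j in H) w j; set PD := \prod_(j in D) w j.
have -> : PL * m ^+ #|B| * PH * (r ^+ #|L| * r ^+ #|D|) * (m ^+ #|H| * m ^+ #|D|)
    = PL * r ^+ #|L| * (r * m) ^+ #|D| * (m ^+ #|B| * m ^+ #|H| * PH).
  by rewrite exprMn; ring.
have -> : m ^+ #|L| * m ^+ #|B| * m ^+ #|H| * (PH * PD)
    = m ^+ #|L| * PD * (m ^+ #|B| * m ^+ #|H| * PH) by ring.
have m_ge0 := ltW m_gt0.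
have prod_ge0 (A : {set 'I_d}) : 0 <= \prod_(j in A) w j.
  by apply: prodr_ge0 => j _; apply: w_ge0.
apply: ler_wpM2r; first by rewrite /PH ?(mulr_ge0, exprn_ge0, prod_ge0).
by apply: ler_pM lowP highP; rewrite /PL ?(mulr_ge0, exprn_ge0, prod_ge0).
Qed.

Lemma prod_le_defect (S : {set 'I_d}) : (d - b <= #|S|)%N ->
  \prod_(j in S) w j
    <= (if defect a b S == 0%N then 1 else r^-1)
       * (m ^+ (#|S| - (d - b)) * \prod_(j in ord_range d b d) w j).
Proof.
move=> le_highS; set M := m ^+ _ * _.
have key : \prod_(j in S) w j * r ^+ defect a b S <= M.
  have high_gt0 := exprn_gt0 #|ord_range d b d| m_gt0.
  rewrite -(ler_pM2r high_gt0); apply: le_trans (prod_mul_exp_defect_le S) _.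
  by rewrite /M card_ord_range ?le_bd ?leqnn // mulrAC -exprD subnK.
have prod_ge0 : 0 <= \prod_(j in S) w j by apply: prodr_ge0 => j _; apply: w_ge0.
have [defect0 | defect_gt0] := posnP (defect a b S).
  by move: key; rewrite defect0 expr0 mulr1 mul1r.
rewrite ler_pdivlMl ?(lt_le_trans ltr01 r_ge1) //.
by apply: le_trans key; rewrite mulrC ler_wpM2l // ler_eXnr.
Qed.

End BlockWeights.

Lemma sum_le_two_level (F : numFieldType) (T : finType) (P : {set T})
    (top : pred T) (f : T -> F) (M r : F) (c : nat) :
    0 <= M -> 1 <= r ->
    (forall x, x \in P -> f x <= (if top x then 1 else r^-1) * M) ->
    (#|[set x in P | top x]| <= c)%N ->
  \sum_(x in P) f x <= (c%:R + (#|P|%:R - c%:R) / r) * M.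
Proof.
move=> M_ge0 r_ge1 f_le; rewrite setIdE => le_top_c.
have r_gt0 : 0 < r := lt_le_trans ltr01 r_ge1.
apply: le_trans (ler_sum _ f_le) _.
rewrite (big_setID [set x | top x]) /=.
rewrite (eq_bigr (fun _ => M)); last by move=> x; rewrite !inE => /andP[_ ->]; rewrite mul1r.
rewrite [X in _ + X](eq_bigr (fun _ => r^-1 * M)); last first.
  by move=> x; rewrite !inE => /andP[/negbTE ->].
rewrite !sumr_const -(cardsID [set x | top x] P) natrD.
move: le_top_c; set t := #|_ :&: _|; set u := #|_ :\: _| => le_tc.
rewrite -subr_ge0.
have -> : (c%:R + (t%:R + u%:R - c%:R) / r) * M - (M *+ t + r^-1 * M *+ u)
    = (c%:R - t%:R) * (1 - r^-1) * M.
  by ring.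
by rewrite !mulr_ge0 // subr_ge0 ?ler_nat // invf_le1.
Qed.

Section Moduli.

Variables (C : numClosedFieldType) (d : nat) (Z : nat -> C).
Hypothesis hmono : forall i, (1 <= i)%N -> (i < d)%N -> `|Z i| <= `|Z i.+1|.

Lemma inI_le i : inI d Z i -> (i <= d)%N.
Proof. by case/or3P => [/eqP->|/eqP->|/and3P[_ le_id _]] //; lia. Qed.

Lemma inI_norm_lt i : inI d Z i -> (1 <= i)%N -> (i < d)%N -> `|Z i| < `|Z i.+1|.
Proof. by case/or3P => [/eqP->|/eqP->|/and3P[_ _ //]]; rewrite ?ltnn. Qed.

Lemma norm_mono i j : (1 <= i)%N -> (i <= j <= d)%N -> `|Z i| <= `|Z j|.
Proof.
move=> i_ge1 /andP[le_ij le_jd].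
apply: (@homo_leq_in _ [pred k | 1 <= k <= d]%N (fun k => `|Z k|)
  (fun x y => is_true (x <= y))).
- by move=> x; apply: lexx.
- by move=> y x z; apply: le_trans.
- by move=> p q; rewrite !inE => ? ? k; rewrite inE; lia.
- by move=> k; rewrite !inE => ? ?; apply: hmono; lia.
all: rewrite ?inE; lia.
Qed.

Lemma norm_block_eq i1 i2 j :
  (forall k, (i1 < k)%N -> (k < i2)%N -> ~~ inI d Z k) -> (i2 <= d)%N ->
  (i1 < j <= i2)%N -> `|Z j| = `|Z i2|.
Proof.
move=> hsucc le_i2d j_mid.
apply: (@homo_leq_in _ [pred k | i1 < k <= i2]%N (fun k => `|Z k|) eq) => //.
- by move=> y x z -> ->.
- by move=> p q; rewrite !inE => ? ? k; rewrite inE; lia.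
- move=> k; rewrite !inE => /andP[lt_i1k _] /andP[_ lt_ki2].
  have /orP[/eqP // | lt_k] : (`|Z k| == `|Z k.+1|) || (`|Z k| < `|Z k.+1|).
    by rewrite -le_eqVlt hmono //; lia.
  case/negP: (hsucc _ lt_i1k lt_ki2).
  by apply/or3P/Or33/and3P; split => //; lia.
all: rewrite ?inE; lia.
Qed.

Variable R : C.
Hypothesis hZ0 : forall i, (1 <= i <= d)%N -> Z i != 0.
Hypothesis hR : is_min_ratio d Z R.

Lemma min_ratio_gt1 : 1 < R.
Proof.
case: hR => -[i [i_ge1 i_lt lt_i ->]] _.
by rewrite ltr_pdivlMr ?mul1r // normr_gt0 hZ0 //; lia.
Qed.

Lemma min_ratio_mul_le i : inI d Z i -> (1 <= i)%N -> (i < d)%N ->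
  R * `|Z i| <= `|Z i.+1|.
Proof.
move=> hi i_ge1 i_lt; have [_ R_min] := hR.
rewrite -ler_pdivlMr ?normr_gt0 ?hZ0 ?R_min ?inI_norm_lt //; lia.
Qed.

Lemma norm_high_block i2 j : inI d Z i2 -> (0 < i2)%N -> (i2 < j <= d)%N ->
  R * `|Z i2| <= `|Z j|.
Proof.
move=> hi2 i2_gt0 j_high.
apply: le_trans (min_ratio_mul_le hi2 _ _) (norm_mono _ _); lia.
Qed.

Variables (i1 i2 : nat).
Hypotheses (hi1 : inI d Z i1) (hi2 : inI d Z i2) (lt_i12 : (i1 < i2)%N).
Hypothesis hsucc : forall k, (i1 < k)%N -> (k < i2)%N -> ~~ inI d Z k.

Lemma norm_low_block j : (1 <= j <= i1)%N -> `|Z j| * R <= `|Z i2|.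
Proof.
move=> j_low; have le_i2d := inI_le hi2.
rewrite -(@norm_block_eq i1 i2 i1.+1) //; last lia.
apply: le_trans (min_ratio_mul_le hi1 _ _); try lia.
rewrite mulrC ler_wpM2l ?norm_mono ?(ltW (lt_trans ltr01 min_ratio_gt1)) //; lia.
Qed.

Lemma norm_prod_le_defect (S : {set 'I_d}) : (d - i2 <= #|S|)%N ->
  `|\prod_(j in S) Z j.+1|
    <= (if defect i1 i2 S == 0%N then 1 else R^-1)
       * (`|Z i2| ^+ (#|S| - (d - i2)) * \prod_(i2.+1 <= j < d.+1) `|Z j|).
Proof.
move=> le_highS; have le_i2d := inI_le hi2.
rewrite normr_prod -(big_ord_range_succ _ _ _ (fun j : nat => `|Z j|)).
apply: (@prod_le_defect _ d i1 i2 (fun j => `|Z j.+1|)) => //; try lia.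
- by rewrite normr_gt0 hZ0 //; lia.
- exact: ltW min_ratio_gt1.
- by move=> j lt_j; apply: norm_low_block; lia.
- by move=> j mid_j; apply: (norm_block_eq hsucc); lia.
- by move=> j high_j; move: (ltn_ord j) => lt_jd; apply: norm_high_block hi2 _ _; lia.
Qed.

End Moduli.

Theorem mainTheorem4 (C : numClosedFieldType) (d : nat) (Z : nat -> C) (R : C)
    (i1 i2 l : nat)
    (hZ0 : forall i, (1 <= i <= d)%N -> Z i != 0)
    (hmono : forall i, (1 <= i)%N -> (i < d)%N -> `|Z i| <= `|Z i.+1|)
    (hnconst : exists i j, [/\ (1 <= i <= d)%N, (1 <= j <= d)%N & `|Z i| != `|Z j|])
    (hR : is_min_ratio d Z R)
    (hi1 : inI d Z i1) (hi2 : inI d Z i2) (hi12 : (i1 < i2)%N)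
    (hsucc : forall k, (i1 < k)%N -> (k < i2)%N -> ~~ inI d Z k)
    (hl1 : (i1 < l)%N) (hl2 : (l < i2)%N) :
  let c' := (('C(d, l))%N%:R - ('C(i2 - i1, i2 - l))%N%:R) / R in
  `|elem_sym d Z (d - l)|
    <= (('C(i2 - i1, i2 - l))%N%:R + c') * `|Z i2| ^+ (i2 - l)
       * \prod_(i2.+1 <= j < d.+1) `|Z j|
  /\ c' < 2 ^+ d / R.
Proof.
move=> c'.
have le_i2d := inI_le hi2.
have R_gt1 := min_ratio_gt1 hZ0 hR.
split; last first.
  rewrite /c' ltr_pM2r ?invr_gt0 ?(lt_trans ltr01 R_gt1) //.
  apply: (@le_lt_trans _ _ 'C(d, l)%:R); first by rewrite lerBlDr lerDl ler0n.
  by rewrite -natrX ltr_nat bin_lt_exp2 //; lia.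
set k := (d - l)%N; set P := [set S : {set 'I_d} | #|S| == k].
set M := `|Z i2| ^+ (i2 - l) * \prod_(i2.+1 <= j < d.+1) `|Z j|.
have bound S : S \in P -> `|\prod_(j in S) Z j.+1|
    <= (if defect i1 i2 S == 0%N then 1 else R^-1) * M.
  rewrite inE /M => /eqP cardS.
  rewrite (_ : i2 - l = #|S| - (d - i2))%N; last by rewrite cardS; lia.
  by apply: (norm_prod_le_defect hmono hZ0 hR hi1 hi2 hi12 hsucc); lia.
have card_P : #|P| = 'C(d, l) by rewrite card_draws card_ord bin_sub //; lia.
rewrite -mulrA /c' -card_P.
apply: le_trans (ler_norm_sum _ _ _) _.
rewrite (eq_bigl (fun S => S \in P)); last by move=> S; rewrite inE.
apply: sum_le_two_level bound _.
- by apply: mulr_ge0; [apply/exprn_ge0/normr_ge0 | apply: prodr_ge0].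
- exact: ltW R_gt1.
rewrite (_ : i2 - l = k - (d - i2))%N; last lia.
have blocks_ordered : (i1 <= i2 <= d)%N by lia.
apply: leq_trans (card_defect0_le k blocks_ordered).
by apply/subset_leq_card/subsetP => S; rewrite !inE.
Qed.
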